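(* Let $K$ be a $\mathbb{Z}/2\mathbb{Z}$-pure global knot diagram in $T^2\times\mathbb{R}$ with respect to $v$. Then $pr(K)$ contains no triangle, i.e. there are no three crossings $q_1,q_2,q_3$ and three arcs of $pr(K)$ joining them pairwise whose union is a null-homotopic loop in $T^2$. In particular no Reidemeister move of type III can be performed on $K$. (This follows from the relation $[K^+_{q_3}]=\pm[K^+_{q_1}]\pm[K^+_{q_2}]$ modulo $[K]$ for such a triangle, which forbids all three classes from being nonzero in $\mathbb{Z}/2\mathbb{Z}$.)
   Context: $T^2=\mathbb{R}^2/\mathbb{Z}^2$ with fixed generators $\alpha,\beta$ of $H_1(T^2;\mathbb{Z})$; $v$ is the constant unit vector field on $T^2$ tangent to the fibres of a linear submersion $f:T^2\to S^1$ whose fibres represent $\beta$; $pr:T^2\times\mathbb{R}\to T^2$ is the projection. A knot diagram is a smooth oriented knot $K\subset T^2\times\mathbb{R}$ such that $pr|_K$ is an immersion whose only multiple points are transverse double points, called crossings. $K$ is global (with respect to $v$) if $pr(K)$ is everywhere transverse to $v$; it is oriented so that (tangent vector of $pr(K)$, $v$) is a positively oriented basis of $T^2$. For a crossing $p$, smoothing $pr(K)$ at $p$ respecting orientations yields two oriented loops $K_p^+,K_p^-$ with $[K_p^+]+[K_p^-]=[K]$ in $H_1(T^2;\mathbb{Z})$. A global knot diagram $K$ is $\mathbb{Z}/2\mathbb{Z}$-pure if (1) $H_1(T^2;\mathbb{Z})/\langle[K]\rangle\cong\mathbb{Z}$, and (2) for every crossing $p$ the class of $K_p^+$ (equivalently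 of $K_p^-$) is nonzero in $G=(H_1(T^2;\mathbb{Z})/\langle[K]\rangle)\otimes\mathbb{Z}/2\mathbb{Z}\cong\mathbb{Z}/2\mathbb{Z}$. *)

From Stdlib Require Import Reals ZArith.
From Coquelicot Require Import Coquelicot.
Open Scope R_scope.

(* T^2 = R^2/Z^2.  A curve on T^2 is represented by a lift
   c = (cx, cy) : R -> R^2 to the universal cover, with parameter circle
   R/Z, and c(t+1) = c(t) + (a,b) where (a,b) in Z^2 = H_1(T^2;Z) is [K]
   in the basis alpha = e1, beta = e2. *)

Definition Zint (x : R) : Prop := exists k : Z, x = IZR k.

Definition same_in_torus (x1 y1 x2 y2 : R) : Prop :=
  Zint (x1 - x2) /\ Zint (y1 - y2).

Definition same_param (s t : R) : Prop := Zint (s - t).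

Definition smooth (f : R -> R) : Prop := forall (n : nat) (x : R), ex_derive_n f n x.

(* K is a knot diagram in T^2 x R: the knot is t |-> (c(t) mod Z^2, z(t)),
   t in R/Z; (a,b) = [K]. *)
Definition knot_diagram (cx cy z : R -> R) (a b : Z) : Prop :=
  smooth cx /\ smooth cy /\ smooth z /\
  (forall t, cx (t + 1) = cx t + IZR a /\ cy (t + 1) = cy t + IZR b /\ z (t + 1) = z t) /\
  (forall s t, same_in_torus (cx s) (cy s) (cx t) (cy t) -> z s = z t -> same_param s t) /\
  (forall t, Derive cx t <> 0 \/ Derive cy t <> 0) /\
  (forall s t, ~ same_param s t -> same_in_torus (cx s) (cy s) (cx t) (cy t) ->
     Derive cx s * Derive cy t - Derive cy s * Derive cx t <> 0) /\
  (forall r s t, ~ same_param r s -> ~ same_param s t -> ~ same_param r t ->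
     same_in_torus (cx r) (cy r) (cx s) (cy s) ->
     same_in_torus (cx s) (cy s) (cx t) (cy t) -> False).

(* v = (0,1): constant unit vector field tangent to the fibres of the linear
   submersion f(x,y) = x, whose fibres represent beta = e2.
   Global: pr(K) transverse to v, oriented so that (c', v) is a positive
   basis, i.e. det(c', v) = cx' > 0. *)
Definition global (cx cy : R -> R) : Prop := forall t, Derive cx t > 0.

(* H_1(T^2;Z)/<[K]> is isomorphic to Z: there is a surjective group
   homomorphism Z^2 -> Z whose kernel is exactly <(a,b)>. *)
Definition quotient_iso_Z (a b : Z) : Prop :=
  exists phi : Z -> Z -> Z,
    (forall x1 y1 x2 y2, phi (x1 + x2)%Z (y1 + y2)%Z = (phi x1 y1 + phi x2 y2)%Z) /\
    (forall n : Z, exists x y, phi x y = n) /\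
    (forall x y, phi x y = 0%Z <-> exists k : Z, x = (k * a)%Z /\ y = (k * b)%Z).

(* The class of (dx,dy) in G = (Z^2/<(a,b)>) (x) Z/2 = Z^2/(<(a,b)> + 2Z^2)
   is nonzero. *)
Definition nonzero_in_G (a b dx dy : Z) : Prop :=
  ~ exists k u w : Z, dx = (k * a + 2 * u)%Z /\ dy = (k * b + 2 * w)%Z.

(* Z/2-pure.  A crossing p is a pair of parameters 0 <= s < t < 1 with
   c(s) = c(t) in T^2; the smoothing loop K_p^+ follows K from s to t, and
   its homology class is c(t) - c(s) in Z^2. *)
Definition Z2_pure (cx cy : R -> R) (a b : Z) : Prop :=
  quotient_iso_Z a b /\
  forall (s t : R) (dx dy : Z), 0 <= s -> s < t -> t < 1 ->
    cx t - cx s = IZR dx -> cy t - cy s = IZR dy ->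
    nonzero_in_G a b dx dy.

(* A triangle in pr(K): three pairwise distinct crossings q1,q2,q3 and three
   arcs of pr(K), arc j being the image of the parameter interval between
   u_j and w_j (0 < |w_j - u_j| < 1), traversed from u_j to w_j; arc 1 joins
   q1 to q2, arc 2 joins q2 to q3, arc 3 joins q3 to q1.  At each crossing the
   loop passes from one branch to the other (the two parameters are distinct
   points of R/Z with the same image in T^2).  The union loop is
   null-homotopic in T^2 iff its lift to R^2 closes up, i.e. the sum of the
   lifted displacements of the three arcs is zero. *)
Definition arc (u w : R) : Prop := u <> w /\ Rabs (w - u) < 1.

Definition has_triangle (cx cy : R -> R) : Prop :=
  exists u1 w1 u2 w2 u3 w3 : R,
    arc u1 w1 /\ arc u2 w2 /\ arc u3 w3 /\
    ~ same_param w1 u2 /\ same_in_torus (cx w1) (cy w1) (cx u2) (cy u2) /\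
    ~ same_param w2 u3 /\ same_in_torus (cx w2) (cy w2) (cx u3) (cy u3) /\
    ~ same_param w3 u1 /\ same_in_torus (cx w3) (cy w3) (cx u1) (cy u1) /\
    ~ same_in_torus (cx u1) (cy u1) (cx u2) (cy u2) /\
    ~ same_in_torus (cx u2) (cy u2) (cx u3) (cy u3) /\
    ~ same_in_torus (cx u1) (cy u1) (cx u3) (cy u3) /\
    (cx w1 - cx u1) + (cx w2 - cx u2) + (cx w3 - cx u3) = 0 /\
    (cy w1 - cy u1) + (cy w2 - cy u2) + (cy w3 - cy u3) = 0.

(* Every crossing of a pure diagram has odd class: the map phi : H_1(T^2) -> Z
   killing [K] sends the displacement c(t) - c(s) between the two preimages of
   a crossing to an odd integer.  At a triangle, the three crossing
   displacements add up to the displacement around the closed, null-homotopic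
   loop formed by the arcs, which is zero; but a sum of three odd integers is
   odd. *)
From Stdlib Require Import Reals ZArith Lia Lra.
From Coquelicot Require Import Coquelicot.
Open Scope R_scope.

Lemma periodic_shift_Z (f : R -> R) (c : R) :
  (forall t, f (t + 1) = f t + c) ->
  forall (n : Z) (t : R), f (t + IZR n) = f t + IZR n * c.
Proof.
  intros Hper n. induction n using Z.peano_ind; intros t.
  - rewrite Rplus_0_r. ring.
  - rewrite succ_IZR, <- Rplus_assoc, Hper, IHn. ring.
  - specialize (IHn t). rewrite <- (Z.succ_pred n), succ_IZR, <- Rplus_assoc, Hper in IHn.
    lra.
Qed.

Lemma periodic_frac_part (f : R -> R) (c r : R) :
  (forall t, f (t + 1) = f t + c) ->
  f r = f (frac_part r) + IZR (Int_part r) * c.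
Proof.
  intros Hper. rewrite <- (periodic_shift_Z f c Hper). unfold frac_part.
  f_equal. ring.
Qed.

Lemma additive_Z_linear (g : Z -> Z) :
  (forall x y, g (x + y)%Z = (g x + g y)%Z) -> forall x, g x = (x * g 1%Z)%Z.
Proof.
  intros Hadd.
  assert (g0 : g 0%Z = 0%Z) by (specialize (Hadd 0%Z 0%Z); simpl in Hadd; lia).
  induction x using Z.peano_ind.
  - exact g0.
  - rewrite <- Z.add_1_r, Hadd, IHx. ring.
  - pose proof (Hadd (Z.pred x) 1%Z) as H.
    rewrite Z.add_1_r, Z.succ_pred in H. lia.
Qed.

Lemma additive_Z2_linear (phi : Z -> Z -> Z) :
  (forall x1 y1 x2 y2, phi (x1 + x2)%Z (y1 + y2)%Z = (phi x1 y1 + phi x2 y2)%Z) ->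
  forall x y, phi x y = (x * phi 1%Z 0%Z + y * phi 0%Z 1%Z)%Z.
Proof.
  intros Hadd x y.
  rewrite <- (Z.add_0_r x), <- (Z.add_0_l y), Hadd.
  rewrite (additive_Z_linear (fun x => phi x 0%Z)), (additive_Z_linear (phi 0%Z)).
  - ring.
  - intros y1 y2. rewrite <- Hadd. reflexivity.
  - intros x1 x2. rewrite <- Hadd. reflexivity.
Qed.

Section PureDiagram.

Variables (cx cy : R -> R) (a b : Z) (phi : Z -> Z -> Z).

Hypothesis cx_periodic : forall t, cx (t + 1) = cx t + IZR a.
Hypothesis cy_periodic : forall t, cy (t + 1) = cy t + IZR b.
Hypothesis phi_linear : forall x y, phi x y = (x * phi 1%Z 0%Z + y * phi 0%Z 1%Z)%Z.
Hypothesis phi_surj : forall n : Z, exists x y, phi x y = n.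
Hypothesis phi_ker : forall x y, phi x y = 0%Z <-> exists k : Z, x = (k * a)%Z /\ y = (k * b)%Z.
Hypothesis pure : forall (s t : R) (dx dy : Z), 0 <= s -> s < t -> t < 1 ->
  cx t - cx s = IZR dx -> cy t - cy s = IZR dy -> nonzero_in_G a b dx dy.

Lemma phi_odd_of_nonzero_in_G dx dy : nonzero_in_G a b dx dy -> Z.Odd (phi dx dy).
Proof.
  intros Hnz.
  destruct (Z.Even_or_Odd (phi dx dy)) as [[m Hm] | Hodd]; [exfalso | exact Hodd].
  destruct (phi_surj m) as [x [y Hxy]].
  (* phi dx dy = 2 phi x y, so (dx, dy) - 2 (x, y) lies in the kernel <(a, b)> *)
  assert (Hker : phi (dx - 2 * x)%Z (dy - 2 * y)%Z = 0%Z).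
  { pose proof (phi_linear dx dy). pose proof (phi_linear x y).
    pose proof (phi_linear (dx - 2 * x)%Z (dy - 2 * y)%Z). lia. }
  apply phi_ker in Hker as [k [Hkx Hky]].
  apply Hnz. exists k, x, y. lia.
Qed.

Lemma crossing_phi_odd_ordered p q dx dy :
  frac_part q < frac_part p -> cx p - cx q = IZR dx -> cy p - cy q = IZR dy ->
  Z.Odd (phi dx dy).
Proof.
  intros Hlt Hdx Hdy.
  set (m := (Int_part p - Int_part q)%Z).
  assert (Hnz : nonzero_in_G a b (dx - m * a)%Z (dy - m * b)%Z).
  { destruct (base_fp q), (base_fp p).
    apply pure with (s := frac_part q) (t := frac_part p); try lra;
      unfold m; rewrite minus_IZR, mult_IZR, minus_IZR.
    - rewrite (periodic_frac_part cx (IZR a) p), (periodic_frac_part cx (IZR a) q) in Hdx;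
        auto; lra.
    - rewrite (periodic_frac_part cy (IZR b) p), (periodic_frac_part cy (IZR b) q) in Hdy;
        auto; lra. }
  apply phi_odd_of_nonzero_in_G in Hnz.
  assert (Hm : phi (m * a)%Z (m * b)%Z = 0%Z) by (apply phi_ker; exists m; auto).
  pose proof (phi_linear dx dy). pose proof (phi_linear (m * a)%Z (m * b)%Z).
  pose proof (phi_linear (dx - m * a)%Z (dy - m * b)%Z).
  destruct Hnz as [n Hn]. exists n. lia.
Qed.

Lemma crossing_phi_odd p q dx dy :
  ~ same_param p q -> cx p - cx q = IZR dx -> cy p - cy q = IZR dy ->
  Z.Odd (phi dx dy).
Proof.
  intros Hpq Hdx Hdy.
  destruct (Rtotal_order (frac_part q) (frac_part p)) as [Hlt | [Heq | Hgt]].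
  - exact (crossing_phi_odd_ordered p q dx dy Hlt Hdx Hdy).
  - exfalso. apply Hpq. exists (Int_part p - Int_part q)%Z.
    unfold frac_part in Heq. rewrite minus_IZR. lra.
  - assert (Hodd : Z.Odd (phi (- dx) (- dy))).
    { apply (crossing_phi_odd_ordered q p); auto; rewrite opp_IZR; lra. }
    destruct Hodd as [n Hn]. exists (- n - 1)%Z.
    pose proof (phi_linear dx dy). pose proof (phi_linear (- dx) (- dy)). lia.
Qed.

End PureDiagram.

Theorem mainTheorem5 (cx cy z : R -> R) (a b : Z) :
  knot_diagram cx cy z a b -> global cx cy -> Z2_pure cx cy a b ->
  ~ has_triangle cx cy.
Proof.
  intros [_ [_ [_ [Hper _]]]] _ [[phi [Hadd [Hsurj Hker]]] Hpure] Htri.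
  pose proof (additive_Z2_linear phi Hadd) as Hlin.
  destruct Htri as (u1 & w1 & u2 & w2 & u3 & w3 & _ & _ & _ &
    S1 & [[k1x E1x] [k1y E1y]] & S2 & [[k2x E2x] [k2y E2y]] &
    S3 & [[k3x E3x] [k3y E3y]] & _ & _ & _ & Sx & Sy).
  assert (Hodd : forall p q dx dy, ~ same_param p q ->
            cx p - cx q = IZR dx -> cy p - cy q = IZR dy -> Z.Odd (phi dx dy)).
  { apply (crossing_phi_odd cx cy a b); auto; intro t; apply Hper. }
  destruct (Hodd _ _ _ _ S1 E1x E1y) as [n1 O1].
  destruct (Hodd _ _ _ _ S2 E2x E2y) as [n2 O2].
  destruct (Hodd _ _ _ _ S3 E3x E3y) as [n3 O3].
  assert (Zx : (k1x + k2x + k3x)%Z = 0%Z) by (apply eq_IZR; rewrite !plus_IZR; lra).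
  assert (Zy : (k1y + k2y + k3y)%Z = 0%Z) by (apply eq_IZR; rewrite !plus_IZR; lra).
  assert (Hsum : (phi k1x k1y + phi k2x k2y + phi k3x k3y)%Z = 0%Z).
  { rewrite <- !Hadd, Zx, Zy, Hlin. ring. }
  lia.
Qed.
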